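(* Let $\mathcal G$ be a strongly connected directed graph with no self loops, vertex set $\mathcal V=\{1,\dots,n\}$ and edge set $\mathcal E=\{1,\dots,m\}$. Let $B=S-D\in\mathbb{R}^{n\times m}$ be its incidence matrix, let $Q=DB^\mathsf{T}$, and let $W=\mathbf{1}z^\mathsf{T}$ and $Q^\ddagger$ be as defined in the context. Let $\omega^{\mathrm u}\in\mathbb{R}^n$ be a constant vector. Consider the dynamics \[ \dot{\tilde\theta}(t)=\omega^{\mathrm u}+c(t),\qquad \tilde\beta(t)=B^\mathsf{T}\tilde\theta(t),\qquad y(t)=D\tilde\beta(t). \] Let $\mathcal T\subset\mathcal E$ be an outward directed spanning tree with root $r$. Let $g_1,\dots,g_{n-1}$ be an ordering of the edges of $\mathcal T$ consistent with the tree order, i.e. $g_a\prec g_b$ implies $a<b$. Let $k>0$ and $k_2>0$. Let $0<t_1<t_2<\dots<t_n$ satisfy $t_{j+1}-t_j>|\tilde\beta_{g_j}(t_j)|/k_2$ for $j=1,\dots,n-1$. For each $i\neq r$, let $j(i)$ denote the unique index with $\mathrm{dst}(g_{j(i)})=i$. Let the control be defined, for each node $i\in\mathcal V$, by \[ c_i(t)=\begin{cases} k\,y_i(t) & \text{if } t<t_1,\\ k\,y_i(t_1)+k_2\,\mathrm{sign}\big(\tilde\beta_{g_{j(i)}}(t)\big) & \text{if } i\neq r \text{ and } t_{j(i)}\le t<t_{j(i)+1},\\ k\,y_i(t_1) & \text{otherwise.}\end{cases} \] Assume that at time $t_1$ the system has converged, in the sense that \[ \tilde\beta(t_1)=-k^{-1}B^\mathsf{T}Q^\ddagger\omega^{\mathrm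 u} \qquad\text{and}\qquad \omega^{\mathrm u}+k\,y(t_1)=W\omega^{\mathrm u}. \] Then $\tilde\beta(t_n)=0$.
   Context: For an edge $e$, $\mathrm{src}(e)$ and $\mathrm{dst}(e)$ denote its source and destination vertices. The matrices $S,D\in\mathbb{R}^{n\times m}$ are defined by $S_{ie}=1$ if node $i$ is the source of edge $e$ and $0$ otherwise, and $D_{ie}=1$ if node $i$ is the destination of edge $e$ and $0$ otherwise. The vector $\mathbf{1}$ is the all-ones vector. The matrix $Q=DB^\mathsf{T}$ is an irreducible rate matrix (nonnegative off-diagonal entries, zero row sums). Let $z>0$ be its left eigenvector for eigenvalue $0$ ($z^\mathsf{T}Q=0$), normalized so that $\mathbf{1}^\mathsf{T}z=1$, and set $W=\mathbf{1}z^\mathsf{T}$. Write $Q=T\begin{bmatrix}0&0\\0&\Lambda\end{bmatrix}T^{-1}$, where $T$ is invertible with first column $\mathbf{1}$, the first row of $T^{-1}$ is $z^\mathsf{T}$, and $\Lambda\in\mathbb{R}^{(n-1)\times(n-1)}$ is invertible. Define $Q^\ddagger=T\begin{bmatrix}0&0\\0&\Lambda^{-1}\end{bmatrix}T^{-1}$. An outward directed spanning tree with root $r$ is a set $\mathcal T$ of $n-1$ edges such that every vertex is reachable from $r$ by a directed path in $\mathcal T$, and each vertex other than $r$ is the destination of exactly one edge of $\mathcal T$. For $f,g\in\mathcal T$, $f\prec g$ means there is a directed walk of nonzero length in $\mathcal T$ from $\mathrm{dst}(f)$ to $\mathrm{dst}(g)$. The convention $\mathrm{sign}(0)=0$ is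 used. Here $\tilde\theta(t)\in\mathbb{R}^n$ are normalized clock phases, $\tilde\beta(t)\in\mathbb{R}^m$ are buffer occupancies relative to the desired offsets, and $\omega(t)=\omega^{\mathrm u}+c(t)$ is the frequency. *)

From HB Require Import structures.
From mathcomp Require Import all_boot all_order all_algebra.
From mathcomp Require Import all_classical all_reals all_analysis.
Set Implicit Arguments. Unset Strict Implicit. Unset Printing Implicit Defensive.
Import Order.TTheory GRing.Theory Num.Theory numFieldNormedType.Exports.
Local Open Scope ring_scope.

Definition edge_rel (N m : nat) (src dst : 'I_m -> 'I_N) : rel 'I_N :=
  [rel i j | [exists e, (src e == i) && (dst e == j)]].

Definition no_self_loops (N m : nat) (src dst : 'I_m -> 'I_N) : Prop :=
  forall e, src e != dst e.

Definition strongly_connected (N m : nat) (src dst : 'I_m -> 'I_N) : Prop :=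
  forall i j, connect (edge_rel src dst) i j.

Definition Smx (R : nzRingType) (N m : nat) (src : 'I_m -> 'I_N) : 'M[R]_(N, m) :=
  \matrix_(i, e) (src e == i)%:R.
Definition Dmx (R : nzRingType) (N m : nat) (dst : 'I_m -> 'I_N) : 'M[R]_(N, m) :=
  \matrix_(i, e) (dst e == i)%:R.
Definition Bmx (R : nzRingType) (N m : nat) (src dst : 'I_m -> 'I_N) : 'M[R]_(N, m) :=
  Smx R src - Dmx R dst.
Definition Qmx (R : nzRingType) (N m : nat) (src dst : 'I_m -> 'I_N) : 'M[R]_N :=
  Dmx R dst *m (Bmx R src dst)^T.

Definition is_left_null_prob (R : realFieldType) (N : nat) (Q : 'M[R]_N) (z : 'cV[R]_N) : Prop :=
  (forall i, 0 < z i 0) /\ z^T *m Q = 0 /\ (const_mx 1 : 'rV[R]_N) *m z = 1.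

Definition Wmx (R : nzRingType) (N : nat) (z : 'cV[R]_N) : 'M[R]_N :=
  const_mx 1 *m z^T.

(* Qdd is Q^ddagger, defined through a decomposition
   Q = T diag(0, L) T^-1 with T invertible, first column of T equal to 1,
   first row of T^-1 equal to z^T, L invertible, and
   Qdd = T diag(0, L^-1) T^-1. (Vertex count is n.+1 = 1 + n.) *)
Definition is_Qddag (R : fieldType) (n : nat) (Q : 'M[R]_(1 + n)) (z : 'cV[R]_(1 + n))
    (Qdd : 'M[R]_(1 + n)) : Prop :=
  exists (T : 'M[R]_(1 + n)) (L : 'M[R]_n),
    [/\ T \in unitmx, col 0 T = const_mx 1, row 0 (invmx T) = z^T, L \in unitmx &
       (Q = T *m block_mx (0 : 'M[R]_1) 0 0 L *m invmx T /\
        Qdd = T *m block_mx (0 : 'M[R]_1) 0 0 (invmx L) *m invmx T)].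

(* The relation "there is an edge of the tree from i to j"; the tree edges are
   g 0, ..., g (N-2) (i.e. the paper's g_1, ..., g_{n-1}). *)
Definition tree_rel (N K m : nat) (src dst : 'I_m -> 'I_N) (g : 'I_K -> 'I_m) : rel 'I_N :=
  [rel i j | [exists a, (src (g a) == i) && (dst (g a) == j)]].

Definition out_spanning_tree (n m : nat) (src dst : 'I_m -> 'I_n.+1)
    (g : 'I_n -> 'I_m) (r : 'I_n.+1) : Prop :=
  [/\ injective g,
      forall i, connect (tree_rel src dst g) r i &
      forall i, i != r -> #|[set a | dst (g a) == i]| = 1%N].

Definition tree_prec (N K m : nat) (src dst : 'I_m -> 'I_N) (g : 'I_K -> 'I_m)
    (f h : 'I_m) : bool :=
  [exists v, tree_rel src dst g (dst f) v && connect (tree_rel src dst g) v (dst h)].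

Definition consistent_order (n m : nat) (src dst : 'I_m -> 'I_n.+1) (g : 'I_n -> 'I_m) : Prop :=
  forall a b : 'I_n, tree_prec src dst g (g a) (g b) -> (a < b)%N.

(* j(i) (zero-based: the paper's j(i) is jidx i + 1) *)
Definition jidx (n m : nat) (dst : 'I_m -> 'I_n.+1) (g : 'I_n -> 'I_m) (i : 'I_n.+1)
    : option 'I_n := [pick a | dst (g a) == i].

(* The paper's t_{j} is tt (j-1) here, for j = 1..n. *)
Definition tt_lo (R : Type) (n : nat) (tt : 'I_n.+1 -> R) (a : 'I_n) : R :=
  tt (widen_ord (leqnSn n) a).
Definition tt_hi (R : Type) (n : nat) (tt : 'I_n.+1 -> R) (a : 'I_n) : R :=
  tt (lift ord0 a).

Definition beta_of (R : nzRingType) (n m : nat) (src dst : 'I_m -> 'I_n.+1)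
    (th : 'cV[R]_n.+1) : 'cV[R]_m := (Bmx R src dst)^T *m th.
Definition y_of (R : nzRingType) (n m : nat) (src dst : 'I_m -> 'I_n.+1)
    (th : 'cV[R]_n.+1) : 'cV[R]_n.+1 := Dmx R dst *m beta_of src dst th.

Definition control (R : realFieldType) (n m : nat) (src dst : 'I_m -> 'I_n.+1)
    (g : 'I_n -> 'I_m) (r : 'I_n.+1) (k k2 : R) (tt : 'I_n.+1 -> R)
    (theta : R -> 'cV[R]_n.+1) (t : R) (i : 'I_n.+1) : R :=
  let t1 := tt ord0 in
  if t < t1 then k * y_of src dst (theta t) i 0
  else match jidx dst g i with
       | Some a =>
           if (i != r) && (tt_lo tt a <= t) && (t < tt_hi tt a)
           then k * y_of src dst (theta t1) i 0
                + k2 * Num.sg (beta_of src dst (theta t) (g a) 0)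
           else k * y_of src dst (theta t1) i 0
       | None => k * y_of src dst (theta t1) i 0
       end.

(* Solution concept for d/dt theta = wu + c(t) (discontinuous right-hand side):
   theta is continuous on (0, +oo) and, outside a finite set of times, each
   component is differentiable with the prescribed derivative. *)
Definition solves (R : realType) (n m : nat) (src dst : 'I_m -> 'I_n.+1)
    (g : 'I_n -> 'I_m) (r : 'I_n.+1) (k k2 : R) (tt : 'I_n.+1 -> R)
    (wu : 'cV[R]_n.+1) (theta : R -> 'cV[R]_n.+1) : Prop :=
  (forall t : R, 0 < t -> forall i, {for t, continuous (fun s : R => theta s i 0)}) /\
  exists F : seq R, forall t : R, 0 < t -> t \notin F -> forall i,
    is_derive t (1 : R) (fun s : R => theta s i 0)
      (wu i 0 + control src dst g r k k2 tt theta t i).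

From HB Require Import structures.
From mathcomp Require Import all_boot all_order all_algebra.
From mathcomp Require Import all_classical all_reals all_analysis.
From mathcomp Require Import lra.
Import Order.TTheory GRing.Theory Num.Theory numFieldNormedType.Exports.

(* After [t1] the second convergence condition makes every node run at the
   common frequency [z^T wu], up to
   the sliding term of its own incoming tree edge [g a], active on
   [[t_a, t_(a+1))].  During that window the incoming edge of [src (g a)] has a
   smaller index, since the ordering is consistent with the tree, so its window
   is over; hence [beta_(g a)' = - k2 sign beta_(g a)].  This drives
   [beta_(g a)] to zero within [|beta_(g a) (t_a)| / k2 < t_(a+1) - t_a], after
   which neither endpoint carries a sliding term and [beta_(g a)] stays zero.
   So at [t_n] the phases agree along every tree edge, hence everywhere. *)

Set Implicit Arguments. Unset Strict Implicit. Unset Printing Implicit Defensive.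
Local Open Scope ring_scope.

Section DerivativeExceptFinite.
Variable R : realType.
Implicit Types (f b : R -> R) (F : seq R).

Lemma ler0_is_derive_nincr f F u v :
  u <= v -> (forall t, u <= t -> t <= v -> {for t, continuous f}) ->
  (forall t, u < t -> t < v -> t \notin F ->
     exists2 d, is_derive t 1 f d & d <= 0) ->
  f v <= f u.
Proof.
elim: F u v => [|x F IH] u v uv fc fd.
  have fd0 t : t \in `]u, v[ -> exists2 d, is_derive t 1 f d & d <= 0.
    by rewrite in_itv /= => /andP[ut tv]; apply: fd.
  apply: (ler0_derive1_nincr _ _ _ (lexx u) uv (lexx v)).
  - by move=> t /fd0[d df _]; exact: ex_derive.
  - by move=> t /fd0[d df d0]; rewrite derive1E derive_val.
  - apply: continuous_in_subspaceT => t.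
    by rewrite inE /= in_itv /= => /andP[ut tv]; apply: fc.
have IHsub a c : u <= a -> a <= c -> c <= v -> ~~ ((a < x) && (x < c)) ->
    f c <= f a.
  move=> ua ac cv xac; apply: IH => // [t a_t t_c|t a_t t_c tF].
    by apply: fc; [apply: le_trans a_t | apply: le_trans cv].
  apply: fd; [exact: le_lt_trans a_t | exact: lt_le_trans t_c cv |].
  rewrite in_cons negb_or tF andbT; apply: contra xac => /eqP <-.
  by rewrite a_t t_c.
have [/andP[ux xv]|xuv] := boolP ((u < x) && (x < v)); last exact: IHsub.
apply: (@le_trans _ _ (f x)); apply: IHsub; rewrite ?ltxx ?andbF //;
  exact: ltW.
Qed.

Lemma is_derive_cst_affine f F c u v :
  u <= v -> (forall t, u <= t -> t <= v -> {for t, continuous f}) ->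
  (forall t, u < t -> t < v -> t \notin F -> is_derive t 1 f c) ->
  f v = f u + c * (v - u).
Proof.
move=> uv fc fd.
have nincr (h : R -> R) :
    (forall t, u <= t -> t <= v -> {for t, continuous h}) ->
    (forall t, u < t -> t < v -> t \notin F -> is_derive t 1 h 0) -> h v <= h u.
  move=> hc hd; apply: (ler0_is_derive_nincr (F := F) uv hc) => t ut tv tF.
  by exists 0 => //; apply: hd.
have lin_cont (t : R) : {for t, continuous (fun s : R => c * s)}.
  exact: mulrl_continuous.
have lin_derive (t : R) : is_derive t 1 (fun s : R => c * s) c.
  apply: is_derive_eq (@is_deriveZ R R^o R^o id c t 1 1 (is_derive_id t 1)) _.
  exact: mulr1.
have le1 : f v - c * v <= f u - c * u.
  apply: (nincr (fun s => f s - c * s)).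
    by move=> t ut tv; apply: (@continuousB R R^o) => //; apply: fc.
  move=> t ut tv tF.
  exact: is_derive_eq (is_deriveB (fd t ut tv tF) (lin_derive t)) (subrr c).
have le2 : c * v - f v <= c * u - f u.
  apply: (nincr (fun s => c * s - f s)).
    by move=> t ut tv; apply: (@continuousB R R^o) => //; apply: fc.
  move=> t ut tv tF.
  exact: is_derive_eq (is_deriveB (lin_derive t) (fd t ut tv tF)) (subrr c).
lra.
Qed.

Lemma sgr_feedback_sqr_nincr b F k2 p q :
  0 < k2 -> (forall t, p <= t -> t <= q -> {for t, continuous b}) ->
  (forall t, p < t -> t < q -> t \notin F ->
     is_derive t 1 b (- k2 * Num.sg (b t))) ->
  forall u v, p <= u -> u <= v -> v <= q -> b v ^+ 2 <= b u ^+ 2.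
Proof.
move=> k2_gt0 bc bd u v pu uv vq.
apply: (ler0_is_derive_nincr (f := b \* b) (F := F) uv).
  move=> t ut tv; have bct := bc t (le_trans pu ut) (le_trans tv vq).
  exact: (@continuousM R R^o).
move=> t ut tv tF; have bdt := bd t (le_lt_trans pu ut) (lt_le_trans tv vq) tF.
exists (b t *: (- k2 * Num.sg (b t)) + b t *: (- k2 * Num.sg (b t))).
  exact: is_deriveM.
have : 0 <= b t * Num.sg (b t) by rewrite mulrC -normrEsg.
rewrite /GRing.scale /=; nra.
Qed.

Lemma sgr_feedback_vanishes b F k2 p q :
  0 < k2 -> p <= q -> (forall t, p <= t -> t <= q -> {for t, continuous b}) ->
  (forall t, p < t -> t < q -> t \notin F ->
     is_derive t 1 b (- k2 * Num.sg (b t))) ->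
  `|b p| / k2 < q - p -> b q = 0.
Proof.
move=> k2_gt0 pq.
wlog bp_ge0 : b / 0 <= b p.
  move=> wlog_b bc bd reach.
  have [bp_ge0|bp_lt0] := leP 0 (b p); first exact: wlog_b.
  apply/eqP; rewrite -oppr_eq0; apply/eqP.
  apply: (wlog_b (fun s => - b s)); rewrite ?normrN ?oppr_ge0 ?ltW //.
    by move=> t pt tq; apply: continuousN; apply: bc.
  move=> t pt tq tF; apply: is_derive_eq (is_deriveN (bd t pt tq tF)) _.
  by rewrite sgrN mulrN.
move=> bc bd reach; apply/eqP/negPn/negP => bq_neq0.
(* [b^2] does not increase, so [b] has no zero on [[p, q]]; it thus stays
   positive and decreases at rate [k2], which it cannot sustain until [q]. *)
have sqr_nincr := sgr_feedback_sqr_nincr k2_gt0 bc bd.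
have b_neq0 t : p <= t -> t <= q -> b t != 0.
  move=> pt tq; apply: contra bq_neq0 => /eqP bt0.
  have := sqr_nincr t q pt tq (lexx q); rewrite bt0 expr0n /=.
  by rewrite -sqrf_eq0 eq_le sqr_ge0 andbT.
have b_gt0 t : p <= t -> t <= q -> 0 < b t.
  move=> pt tq; rewrite lt_def b_neq0 //=; rewrite leNgt; apply/negP => bt_lt0.
  have [c] : exists2 c, c \in `[p, t] & b c = 0.
    apply: IVT pt _ _.
      apply: continuous_in_subspaceT => s; rewrite inE /= in_itv /=.
      by move=> /andP[ps st]; apply: bc => //; apply: le_trans tq.
    by rewrite ge_min le_max (ltW bt_lt0) bp_ge0 orbT.
  rewrite in_itv /= => /andP[pc ct] bc0.
  by move: (b_neq0 c pc (le_trans ct tq)); rewrite bc0 eqxx.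
have bq : b q = b p + - k2 * (q - p).
  apply: (is_derive_cst_affine (F := F) (c := - k2) pq bc) => t pt tq tF.
  apply: is_derive_eq (bd t pt tq tF) _.
  by rewrite gtr0_sg ?mulr1 // b_gt0 ?ltW.
have := b_gt0 q pq (lexx q); move: reach.
rewrite ger0_norm // ltr_pdivrMr // bq; nra.
Qed.

End DerivativeExceptFinite.

Lemma beta_ofE (R : nzRingType) n m (src dst : 'I_m -> 'I_n.+1)
    (th : 'cV[R]_n.+1) e :
  beta_of src dst th e 0 = th (src e) 0 - th (dst e) 0.
Proof.
rewrite /beta_of mxE.
under eq_bigr => i _ do rewrite !mxE mulrBl !mulr_natl !mulrb ![_ == i]eq_sym.
by rewrite sumrB -!big_mkcond !big_pred1_eq.
Qed.

Lemma Wmx_mulE (R : nzRingType) n (z v : 'cV[R]_n) i :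
  (Wmx z *m v) i 0 = (z^T *m v) 0 0.
Proof. by rewrite /Wmx -mulmxA mxE big_ord1 mxE mul1r. Qed.

Lemma tt_homo {R : realFieldType} {n} {tt : 'I_n.+1 -> R} :
  (forall a : 'I_n, tt_lo tt a < tt_hi tt a) ->
  {homo tt : i j / (i <= j)%N >-> i <= j}.
Proof.
move=> tt_step i j ij.
pose f (l : nat) := tt (inord l).
have f_step : {in [pred l | (l <= n)%N], forall l,
    l.+1 \in [pred l | (l <= n)%N] -> f l <= f l.+1}.
  move=> l _ /= ln; rewrite /f.
  have -> : inord l = widen_ord (leqnSn n) (Ordinal ln).
    by apply: val_inj; rewrite /= inordK // ltnW.
  have -> : inord l.+1 = lift ord0 (Ordinal ln).
    by apply: val_inj; rewrite /= inordK.
  exact/ltW/tt_step.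
have D_convex : {in [pred l | (l <= n)%N] &, forall a c l,
    (a < l < c)%O -> l \in [pred l | (l <= n)%N]}.
  by move=> a c _ /= cn l /andP[_ lc]; apply: leq_trans (ltnW lc) cn.
have := Order.NatMonotonyTheory.nondecn_inP D_convex f_step i j
  (ltn_ord i) (ltn_ord j) ij.
by rewrite /f !inord_val.
Qed.

Section OutTree.
Variables (n m : nat) (src dst : 'I_m -> 'I_n.+1) (g : 'I_n -> 'I_m).

Lemma tree_connect_eq (T : eqType) (f : 'I_n.+1 -> T) r :
  (forall i, connect (tree_rel src dst g) r i) ->
  (forall a, f (src (g a)) = f (dst (g a))) -> forall i, f i = f r.
Proof.
move=> r_reach f_edge i; apply/eqP.
have f_closed : fingraph.closed (tree_rel src dst g) [pred i | f i == f r].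
  by move=> x y /existsP[a /andP[/eqP <- /eqP <-]]; rewrite !inE f_edge.
by have := closed_connect f_closed (r_reach i); rewrite !inE eqxx => <-.
Qed.

Lemma consistent_order_parent a b :
  consistent_order src dst g -> dst (g b) = src (g a) -> (b < a)%N.
Proof.
move=> g_order ba; apply: g_order; apply/existsP; exists (dst (g a)).
by rewrite connect0 andbT; apply/existsP; exists a; rewrite ba !eqxx.
Qed.

Variable r : 'I_n.+1.
Hypothesis in_degree1 : forall i, i != r -> #|[set a | dst (g a) == i]| = 1%N.

Lemma tree_dst_neq_root a : dst (g a) != r.
Proof.
apply/negP => /eqP dst_r.
have card_edges : n = (\sum_i #|[set a | dst (g a) == i]|)%N.
  rewrite -[LHS]card_ord -sum1_card (partition_big (dst \o g) predT) //=.
  by apply: eq_bigr => i _; rewrite sum1dep_card.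
move: card_edges; rewrite (bigD1 r) //= (eq_bigr (fun=> 1%N)); last first.
  by move=> i /in_degree1.
rewrite sum1_card cardC1 card_ord /= -{1}[n]add0n => /eqP.
rewrite eqn_add2r eq_sym cards_eq0 => /eqP/setP/(_ a).
by rewrite !inE dst_r eqxx.
Qed.

Lemma tree_dst_inj : injective (dst \o g).
Proof.
move=> a b /= ab; have /eqP/cards1P[c Ec] := in_degree1 (tree_dst_neq_root a).
have : a \in [set a' | dst (g a') == dst (g a)] by rewrite inE.
have : b \in [set a' | dst (g a') == dst (g a)] by rewrite inE ab.
by rewrite Ec !inE => /eqP -> /eqP ->.
Qed.

Lemma jidx_tree_dst a : jidx dst g (dst (g a)) = Some a.
Proof.
rewrite /jidx; case: pickP => [b /eqP/tree_dst_inj -> //|no_b].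
by have := no_b a; rewrite eqxx.
Qed.

End OutTree.

Section SlidingPhase.
Variables (R : realType) (n m : nat) (src dst : 'I_m -> 'I_n.+1).
Variables (g : 'I_n -> 'I_m) (r : 'I_n.+1) (k k2 : R) (tt : 'I_n.+1 -> R).
Variables (wu : 'cV[R]_n.+1) (theta : R -> 'cV[R]_n.+1) (F : seq R) (w : R).
Hypothesis in_degree1 : forall i, i != r -> #|[set a | dst (g a) == i]| = 1%N.
Hypothesis g_order : consistent_order src dst g.
Hypothesis k2_gt0 : 0 < k2.
Hypothesis t1_gt0 : 0 < tt ord0.
Hypothesis tt_step : forall a : 'I_n, tt_lo tt a < tt_hi tt a.
Hypothesis theta_cont :
  forall t, 0 < t -> forall i, {for t, continuous (fun s => theta s i 0)}.
Hypothesis theta_derive : forall t, 0 < t -> t \notin F -> forall i,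
  is_derive t 1 (fun s => theta s i 0)
    (wu i 0 + control src dst g r k k2 tt theta t i).
Hypothesis synchronized :
  forall i, wu i 0 + k * y_of src dst (theta (tt ord0)) i 0 = w.

Local Notation beta e t := (beta_of src dst (theta t) e 0).
Local Notation y1 i := (y_of src dst (theta (tt ord0)) i 0).

Lemma t1_le_lo a : tt ord0 <= tt_lo tt a.
Proof. exact: (tt_homo tt_step). Qed.

Lemma control_tree_dst a t : tt ord0 <= t ->
  control src dst g r k k2 tt theta t (dst (g a)) =
  k * y1 (dst (g a)) +
  (if (tt_lo tt a <= t) && (t < tt_hi tt a) then k2 * Num.sg (beta (g a) t)
   else 0).
Proof.
move=> t1_le_t; rewrite /control ltNge t1_le_t /= (jidx_tree_dst in_degree1).
by rewrite (tree_dst_neq_root in_degree1) /=; case: ifP; rewrite ?addr0.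
Qed.

Lemma control_tree_src a t : tt_lo tt a <= t ->
  control src dst g r k k2 tt theta t (src (g a)) = k * y1 (src (g a)).
Proof.
move=> lo_le_t; rewrite /control ltNge (le_trans (t1_le_lo a) lo_le_t) /=.
rewrite /jidx; case: pickP => [b /eqP/(consistent_order_parent g_order) ba|] //.
have /le_trans/(_ lo_le_t) hi_le_t : tt_hi tt b <= tt_lo tt a.
  exact/(tt_homo tt_step)/ba.
by rewrite ltNge hi_le_t andbF.
Qed.

Lemma beta_funE e : (fun s => beta e s) =
  (fun s => theta s (src e) 0) - (fun s => theta s (dst e) 0).
Proof. by apply/funext => s; rewrite beta_ofE. Qed.

Lemma beta_continuous e t : 0 < t -> {for t, continuous (fun s => beta e s)}.
Proof.
move=> t_gt0; rewrite beta_funE.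
by apply: (@continuousB R R^o); apply: theta_cont.
Qed.

Lemma is_derive_tree_beta a t : tt_lo tt a <= t -> t \notin F ->
  is_derive t 1 (fun s => beta (g a) s)
    (if t < tt_hi tt a then - k2 * Num.sg (beta (g a) t) else 0).
Proof.
move=> lo_le_t tF.
have t_gt0 := lt_le_trans t1_gt0 (le_trans (t1_le_lo a) lo_le_t).
have theta_d i := theta_derive t_gt0 tF i.
rewrite beta_funE; apply: is_derive_eq (is_deriveB (theta_d _) (theta_d _)) _.
rewrite control_tree_src // control_tree_dst ?(le_trans (t1_le_lo a)) //.
rewrite lo_le_t addrA !synchronized /=.
by case: ifP => _; rewrite ?addr0 ?subrr // opprD addrA subrr add0r mulNr.
Qed.

Lemma tree_beta_vanishes a :
  `|beta (g a) (tt_lo tt a)| / k2 < tt_hi tt a - tt_lo tt a ->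
  beta (g a) (tt ord_max) = 0.
Proof.
move=> dwell; have lo_gt0 := lt_le_trans t1_gt0 (t1_le_lo a).
have cont u v : tt_lo tt a <= u ->
    forall t, u <= t -> t <= v -> {for t, continuous (fun s => beta (g a) s)}.
  move=> lo_u t ut _; apply: beta_continuous.
  exact: lt_le_trans lo_gt0 (le_trans lo_u ut).
have lo_hi := ltW (tt_step a).
have hi0 : beta (g a) (tt_hi tt a) = 0.
  apply: (sgr_feedback_vanishes k2_gt0 lo_hi (cont _ _ (lexx _)) _ dwell).
  move=> t lo_t t_hi tF.
  by have := is_derive_tree_beta (ltW lo_t) tF; rewrite t_hi.
have hi_max : tt_hi tt a <= tt ord_max.
  by apply: (tt_homo tt_step); rewrite /= /bump /=; exact: ltn_ord a.
suff -> : beta (g a) (tt ord_max) =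
    beta (g a) (tt_hi tt a) + 0 * (tt ord_max - tt_hi tt a).
  by rewrite hi0 mul0r addr0.
apply: (is_derive_cst_affine hi_max (cont _ _ lo_hi)) => t hi_t _ tF.
have lo_t := ltW (le_lt_trans lo_hi hi_t).
by have := is_derive_tree_beta lo_t tF; rewrite ltNge (ltW hi_t).
Qed.

End SlidingPhase.

Theorem theorem2 (R : realType) (n m : nat) (src dst : 'I_m -> 'I_n.+1)
  (z : 'cV[R]_n.+1) (Qdd : 'M[R]_n.+1) (wu : 'cV[R]_n.+1)
  (g : 'I_n -> 'I_m) (r : 'I_n.+1) (k k2 : R) (tt : 'I_n.+1 -> R)
  (theta : R -> 'cV[R]_n.+1) :
  no_self_loops src dst ->
  strongly_connected src dst ->
  is_left_null_prob (Qmx R src dst) z ->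
  is_Qddag (Qmx R src dst) z Qdd ->
  out_spanning_tree src dst g r ->
  consistent_order src dst g ->
  0 < k -> 0 < k2 ->
  0 < tt ord0 ->
  (forall a : 'I_n, tt_lo tt a < tt_hi tt a) ->
  solves src dst g r k k2 tt wu theta ->
  (forall a : 'I_n,
     tt_hi tt a - tt_lo tt a
       > `|beta_of src dst (theta (tt_lo tt a)) (g a) 0| / k2) ->
  beta_of src dst (theta (tt ord0))
    = - k^-1 *: ((Bmx R src dst)^T *m Qdd *m wu) ->
  wu + k *: y_of src dst (theta (tt ord0)) = Wmx z *m wu ->
  beta_of src dst (theta (tt ord_max)) = 0.
Proof.
move=> _ _ _ _ [_ r_reach in_degree1] g_order _ k2_gt0 t1_gt0 tt_step
  [theta_cont [F theta_derive]] dwell _ frequency_sync.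
have synchronized i :
    wu i 0 + k * y_of src dst (theta (tt ord0)) i 0 = (z^T *m wu) 0 0.
  have := congr1 (fun M : 'cV[R]_n.+1 => M i 0) frequency_sync.
  by rewrite Wmx_mulE => <-; rewrite !mxE.
have tree_beta0 a := tree_beta_vanishes in_degree1 g_order k2_gt0 t1_gt0
  tt_step theta_cont theta_derive synchronized (dwell a).
have edge_eq a :
    theta (tt ord_max) (src (g a)) 0 = theta (tt ord_max) (dst (g a)) 0.
  by apply/eqP; rewrite -subr_eq0 -beta_ofE tree_beta0.
have theta_const :=
  tree_connect_eq (f := fun i => theta (tt ord_max) i 0) r_reach edge_eq.
by apply/matrixP => e j; rewrite ord1 beta_ofE !theta_const subrr mxE.
Qed.
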